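(* Let $f:\mathbb{R}^d\to\mathbb{R}$ be convex with minimizer $\boldsymbol x_0=\mathop{\mathrm{argmin}}_{\boldsymbol x}f(\boldsymbol x)$, and suppose there exist $\rho>0$ and $r>0$ such that $f$ is twice differentiable on $B(\boldsymbol x_0,r)$ with $\nabla^2f(\boldsymbol x)\succeq\rho\boldsymbol I$ for all $\boldsymbol x\in B(\boldsymbol x_0,r)$. Then $$\|\boldsymbol u\|_2\ge\rho\min\{\|\boldsymbol x-\boldsymbol x_0\|_2,r\},\qquad\forall\boldsymbol u\in\partial f(\boldsymbol x),\ \boldsymbol x\in\mathbb{R}^d.$$ If moreover $g:\mathbb{R}^d\to\mathbb{R}$ is convex and $\lambda$-Lipschitz (w.r.t. $\|\cdot\|_2$) for some $\lambda<\rho r$, then $f+g$ has a unique minimizer and it belongs to $B(\boldsymbol x_0,\lambda/\rho)$.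
   Context: $B(\boldsymbol x,r)$ is the closed Euclidean ball; $\partial f$ is the subdifferential. *)

From HB Require Import structures.
From mathcomp Require Import all_boot all_order all_algebra.
From mathcomp Require Import all_classical all_reals all_analysis.
Set Implicit Arguments. Unset Strict Implicit. Unset Printing Implicit Defensive.
Import Order.TTheory GRing.Theory Num.Theory.
Import numFieldNormedType.Exports.
Local Open Scope ring_scope.
Local Open Scope classical_set_scope.

Section Defs.
Variables (R : realType) (d : nat).
Notation V := 'rV[R]_d.

Definition dot (x y : V) : R := \sum_(i < d) x ord0 i * y ord0 i.
Definition norm2 (x : V) : R := Num.sqrt (dot x x).

Definition cball2 (x : V) (r : R) : set V := [set y | norm2 (y - x) <= r].

Definition convex_fun (f : V -> R) : Prop :=
  forall (x y : V) (t : R), 0 <= t -> t <= 1 ->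
    f (t *: x + (1 - t) *: y) <= t * f x + (1 - t) * f y.

Definition subgrad (f : V -> R) (x u : V) : Prop :=
  forall y : V, f x + dot u (y - x) <= f y.

Definition is_minimizer (f : V -> R) (x : V) : Prop := forall y : V, f x <= f y.

(* f is twice (Frechet) differentiable at x: f is differentiable on a
   neighbourhood of x and its differential y |-> Df(y) is differentiable at x
   (tested on each direction v, which is equivalent in finite dimension). *)
Definition twice_differentiable_at (f : V -> R) (x : V) : Prop :=
  (\forall y \near x, differentiable f y) /\
  (forall v : V, differentiable (fun y => 'd f y v) x).

Definition hessian (f : V -> R) (x v w : V) : R := 'd (fun y => 'd f y v) x w.

Definition hessian_ge (f : V -> R) (x : V) (rho : R) : Prop :=
  forall v : V, rho * dot v v <= hessian f x v v.

Definition lipschitz2 (g : V -> R) (lam : R) : Prop :=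
  forall x y : V, `|g x - g y| <= lam * norm2 (x - y).
End Defs.

From HB Require Import structures.
From mathcomp Require Import all_boot all_order all_algebra.
From mathcomp Require Import all_classical all_reals all_analysis.
From mathcomp Require Import unstable lra ring.
Import Order.TTheory GRing.Theory Num.Theory.
Import numFieldNormedType.Exports.
Set Implicit Arguments. Unset Strict Implicit. Unset Printing Implicit Defensive.
Local Open Scope ring_scope.
Local Open Scope classical_set_scope.

(* Along a ray t |-> x0 + t e (|e| = 1) from the minimizer, f is convex, minimal
   at t = 0 and has second derivative at least rho on [-r, r]; so its slope at
   t in [0, r] is at least rho t, and, by convexity beyond r,
     f (x0 + s e) - f (x0 + tau e) >= rho tau (s - tau)   for 0 <= tau < min s r.
   Testing a subgradient u at x = x0 + s e against x0 + tau e yields |u| >= rho tau.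
   Against a lam-Lipschitz g, the same increment shows that f + g strictly
   decreases when x is moved towards x0 as long as |x - x0| > lam / rho,
   where lam / rho < r.
   Hence a minimizer of f + g over the compact ball B(x0, r) lies in
   B(x0, lam / rho), is an interior local minimizer of a convex function, hence
   global, and it is unique because f is strictly convex on B(x0, r). *)

Section Euclidean.
Variables (R : realType) (d : nat).
Implicit Types (x y z : 'rV[R]_d) (a : R).

Lemma dotC x y : dot x y = dot y x.
Proof. by apply: eq_bigr => i _; rewrite mulrC. Qed.

Lemma dotDl x y z : dot (x + y) z = dot x z + dot y z.
Proof. by rewrite /dot -big_split; apply: eq_bigr => i _; rewrite !mxE mulrDl. Qed.

Lemma dotZl a x y : dot (a *: x) y = a * dot x y.
Proof. by rewrite /dot mulr_sumr; apply: eq_bigr => i _; rewrite !mxE mulrA. Qed.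

Lemma dotNl x y : dot (- x) y = - dot x y.
Proof. by rewrite -scaleN1r dotZl mulN1r. Qed.

Lemma dotBl x y z : dot (x - y) z = dot x z - dot y z.
Proof. by rewrite dotDl dotNl. Qed.

Lemma dotDr x y z : dot x (y + z) = dot x y + dot x z.
Proof. by rewrite dotC dotDl !(dotC x). Qed.

Lemma dotZr a x y : dot x (a *: y) = a * dot x y.
Proof. by rewrite dotC dotZl dotC. Qed.

Lemma dotBr x y z : dot x (y - z) = dot x y - dot x z.
Proof. by rewrite dotC dotBl !(dotC x). Qed.

Lemma dot0l x : dot 0 x = 0.
Proof. by rewrite -(scale0r 0) dotZl mul0r. Qed.

Lemma dotxx_ge0 x : 0 <= dot x x.
Proof. by apply: sumr_ge0 => i _; rewrite -expr2 sqr_ge0. Qed.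

Lemma dotxx_eq0 x : (dot x x == 0) = (x == 0).
Proof.
apply/idP/eqP => [|->]; last by rewrite dot0l.
rewrite psumr_eq0 => [/allP x0|i _]; last by rewrite -expr2 sqr_ge0.
apply/rowP => i; have /x0 : i \in index_enum 'I_d by rewrite mem_index_enum.
by rewrite /= mulf_eq0 orbb mxE => /eqP.
Qed.

Lemma norm2_ge0 x : 0 <= norm2 x.
Proof. exact: sqrtr_ge0. Qed.

Lemma sqr_norm2 x : norm2 x ^+ 2 = dot x x.
Proof. by rewrite sqr_sqrtr // dotxx_ge0. Qed.

Lemma norm2_le_sqr x a : 0 <= a -> dot x x <= a ^+ 2 -> norm2 x <= a.
Proof.
move=> a0 xa; rewrite -(ler_pXn2r (_ : 0 < 2)%N) ?nnegrE ?norm2_ge0 //.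
by rewrite sqr_norm2.
Qed.

Lemma norm2_eq0 x : (norm2 x == 0) = (x == 0).
Proof. by rewrite -dotxx_eq0 -sqr_norm2 sqrf_eq0. Qed.

Lemma norm2_gt0 x : (0 < norm2 x) = (x != 0).
Proof. by rewrite lt_def norm2_eq0 norm2_ge0 andbT. Qed.

Lemma norm2Z a x : norm2 (a *: x) = `|a| * norm2 x.
Proof. by rewrite /norm2 dotZl dotZr mulrA sqrtrM ?sqr_ge0 // -expr2 sqrtr_sqr. Qed.

Lemma norm2_0 : norm2 (0 : 'rV[R]_d) = 0.
Proof. by rewrite /norm2 dot0l sqrtr0. Qed.

Lemma norm2N x : norm2 (- x) = norm2 x.
Proof. by rewrite -scaleN1r norm2Z normrN normr1 mul1r. Qed.

Lemma dot_le_norm2 x y : dot x y <= norm2 x * norm2 y.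
Proof.
have [->|x0] := eqVneq x 0; first by rewrite dot0l norm2_0 mul0r.
have [->|y0] := eqVneq y 0; first by rewrite dotC dot0l norm2_0 mulr0.
have := dotxx_ge0 (norm2 y *: x - norm2 x *: y).
rewrite !(dotBl, dotBr, dotZl, dotZr) -!sqr_norm2 (dotC y x).
have : 0 < norm2 x * norm2 y by rewrite mulr_gt0 ?norm2_gt0.
nra.
Qed.

Lemma ler_norm2D x y : norm2 (x + y) <= norm2 x + norm2 y.
Proof.
apply: norm2_le_sqr; first by rewrite addr_ge0 ?norm2_ge0.
rewrite !(dotDl, dotDr) (dotC y x) -!sqr_norm2.
have := dot_le_norm2 x y; have := norm2_ge0 x; have := norm2_ge0 y; nra.
Qed.

Lemma ler_dist_norm2 x y : `|norm2 x - norm2 y| <= norm2 (x - y).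
Proof.
have := ler_norm2D (x - y) y; have := ler_norm2D (y - x) x.
by rewrite !subrK -opprB norm2N ler_norml; lra.
Qed.

Lemma ler_mx_norm_norm2 x : `|x| <= norm2 x.
Proof.
rewrite [leLHS]/Num.norm /= mx_normrE; apply: bigmax_le => [|[i j] _ /=].
  exact: norm2_ge0.
rewrite (ord1 i) -sqrtr_sqr; apply: ler_wsqrtr.
rewrite /dot (bigD1 j) //= expr2 lerDl; apply: sumr_ge0 => k _.
by rewrite -expr2 sqr_ge0.
Qed.

Lemma ler_norm2_mx_norm x : norm2 x <= d%:R * `|x|.
Proof.
apply: norm2_le_sqr; first by rewrite mulr_ge0.
have : dot x x <= d%:R * `|x| ^+ 2.
  rewrite /dot -[d in d%:R]card_ord -sum1_card natr_sum mulr_suml.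
  apply: ler_sum => i _; rewrite mul1r -expr2 -real_normK ?num_real //.
  rewrite lerXn2r ?nnegrE // [leRHS]/Num.norm /= mx_normrE.
  by apply/bigmax_geP; right; exists (ord0, i).
move/le_trans; apply; rewrite exprMn ler_wpM2r ?sqr_ge0 //.
case: d => [|n]; first by rewrite expr0n.
by rewrite expr2 ler_peMl // ler1n.
Qed.

Lemma cball2_segment (x0 y c : 'rV[R]_d) (r s : R) :
  cball2 x0 r y -> cball2 x0 r c -> 0 <= s <= 1 -> cball2 x0 r (c + s *: (y - c)).
Proof.
rewrite /cball2 /= => yr cr /andP[s0 s1].
have -> : c + s *: (y - c) - x0 = (1 - s) *: (c - x0) + s *: (y - x0).
  by apply/rowP => i; rewrite !mxE; ring.
apply: le_trans (ler_norm2D _ _) _; rewrite !norm2Z !ger0_norm ?subr_ge0 //.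
have : (1 - s) * norm2 (c - x0) <= (1 - s) * r by rewrite ler_wpM2l ?subr_ge0.
have : s * norm2 (y - x0) <= s * r by rewrite ler_wpM2l.
lra.
Qed.

End Euclidean.

Lemma MVT_subinterval (R : realType) (F dF : R -> R) (a b s t : R) :
  (forall x, a <= x <= b -> is_derive x 1 F (dF x)) ->
  a <= s -> s < t -> t <= b ->
  exists2 xi, s < xi < t & F t - F s = dF xi * (t - s).
Proof.
move=> dF_F le_as st tb.
have dF_F' x : x \in `[s, t]%R -> is_derive x 1 F (dF x).
  rewrite in_itv /= => /andP[sx xt]; apply: dF_F.
  by rewrite (le_trans le_as sx) (le_trans xt tb).
have F_cont : {within `[s, t], continuous F}.
  by apply: derivable_within_continuous => x /dF_F' [].
have [xi] := MVT st (fun x xst => dF_F' x (subset_itv_oo_cc xst)) F_cont.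
by rewrite in_itv /=; exists xi.
Qed.

Section SecondDerivativeLowerBound.
Variables (R : realType) (phi phi1 phi2 : R -> R) (a b c : R).
Hypothesis derivatives : forall s, a <= s <= b ->
  [/\ is_derive s 1 phi (phi1 s), is_derive s 1 phi1 (phi2 s) & c <= phi2 s].

Lemma phi_MVT s t : a <= s -> s < t -> t <= b ->
  exists2 xi, s < xi < t & phi t - phi s = phi1 xi * (t - s).
Proof. by apply: MVT_subinterval => x /derivatives[]. Qed.

Lemma derive1_increment_ge s t : a <= s -> s <= t -> t <= b ->
  c * (t - s) <= phi1 t - phi1 s.
Proof.
move=> le_as; rewrite le_eqVlt => /predU1P[<- _|st tb].
  by rewrite !subrr mulr0.
have phi1_phi2 x : a <= x <= b -> is_derive x 1 phi1 (phi2 x).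
  by case/derivatives.
have [xi /andP[sxi xit] ->] := MVT_subinterval phi1_phi2 le_as st tb.
have /derivatives[_ _] : a <= xi <= b.
  by rewrite (le_trans le_as (ltW sxi)) (le_trans (ltW xit) tb).
by move/ler_wpM2r; apply; rewrite subr_ge0 ltW.
Qed.

End SecondDerivativeLowerBound.

Lemma midpoint_convex_lt (R : realType) (phi phi1 phi2 : R -> R) (c : R) :
  (forall s : R, 0 <= s <= 1 ->
    [/\ is_derive s 1 phi (phi1 s), is_derive s 1 phi1 (phi2 s) & c <= phi2 s]) ->
  0 < c -> phi 2^-1 - phi 0 < phi 1 - phi 2^-1.
Proof.
move=> derivatives c0.
have h0 : (0 : R) < 2^-1 by rewrite invr_gt0.
have h1 : (2^-1 : R) < 1 by rewrite invf_lt1 // ltr1n.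
have [xi /andP[xi0 xi1] ->] := phi_MVT derivatives (lexx 0) h0 (ltW h1).
have [eta /andP[eta0 eta1] ->] := phi_MVT derivatives (ltW h0) h1 (lexx 1).
have xi_eta : xi < eta by rewrite (lt_trans xi1).
have := derive1_increment_ge derivatives (ltW xi0) (ltW xi_eta) (ltW eta1).
have : 0 < c * (eta - xi) by rewrite mulr_gt0 // subr_gt0.
have -> : (1 : R) - 2^-1 = 2^-1 - 0 by rewrite subr0 {1}(splitr 1) mul1r addrK.
by rewrite subr0 => ? ?; rewrite ltr_pM2r //; lra.
Qed.

Section ConvexOnALine.
Variables (R : realType) (phi phi1 phi2 : R -> R) (rho r : R).
Hypothesis derivatives : forall s, - r <= s <= r ->
  [/\ is_derive s 1 phi (phi1 s), is_derive s 1 phi1 (phi2 s) & rho <= phi2 s].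
Hypothesis r_gt0 : 0 < r.
Hypothesis rho_ge0 : 0 <= rho.
Hypothesis phi_min : forall t, phi 0 <= phi t.
Hypothesis phi_convex : forall x y l, 0 <= l -> l <= 1 ->
  phi (l * x + (1 - l) * y) <= l * phi x + (1 - l) * phi y.

Lemma derive1_at_min_eq0 : phi1 0 = 0.
Proof.
have /derivatives[[_ <-] _ _] : - r <= 0 <= r by rewrite oppr_le0 ltW.
have [] : is_derive (0 : R) 1 phi 0.
  apply: (@derive1_at_min _ phi (- r) r) => [|t||t _].
  - by rewrite -subr_ge0 opprK addr_ge0 ?ltW.
  - rewrite in_itv /= => /andP[rt tr].
    by have /derivatives[[]] : - r <= t <= r by rewrite !ltW.
  - by rewrite in_itv /= oppr_lt0 r_gt0.
  - exact: phi_min.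
by move=> _ ->.
Qed.

Lemma derive1_ge t : 0 <= t -> t <= r -> rho * t <= phi1 t.
Proof.
move=> t0 tr; have := derive1_increment_ge derivatives _ t0 tr.
by rewrite subr0 derive1_at_min_eq0 subr0; apply; rewrite oppr_le0 ltW.
Qed.

Let increment_ge_in s tau : 0 <= tau -> tau < s -> s <= r ->
  rho * tau * (s - tau) <= phi s - phi tau.
Proof.
move=> tau0 taus sr.
have rtau : - r <= tau by rewrite (le_trans _ tau0) // oppr_le0 ltW.
have [xi /andP[tauxi xis] ->] := phi_MVT derivatives rtau taus sr.
rewrite ler_wpM2r ?subr_ge0 ?(ltW taus) //.
have xi0 : 0 <= xi by rewrite (le_trans tau0) // ltW.
apply: le_trans (derive1_ge xi0 (ltW (lt_le_trans xis sr))).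
by rewrite ler_wpM2l // ltW.
Qed.

Lemma increment_ge s tau : 0 <= tau -> tau < s -> tau < r ->
  rho * tau * (s - tau) <= phi s - phi tau.
Proof.
move=> tau0 taus taur.
have [|rs] := leP s r; first exact: increment_ge_in.
have increment_r := increment_ge_in tau0 taur (lexx r).
set l := (r - tau) / (s - tau).
have st : 0 < s - tau by rewrite subr_gt0.
have l0 : 0 < l by rewrite divr_gt0 // subr_gt0.
have l1 : l <= 1 by rewrite ler_pdivrMr // mul1r; lra.
have el : l * (s - tau) = r - tau by rewrite divfK // gt_eqF.
have := phi_convex s tau (ltW l0) l1.
have -> : l * s + (1 - l) * tau = r by rewrite -[r](subrK tau) -el; ring.
move=> convex_r; rewrite -(ler_pM2l l0).
have -> : l * (rho * tau * (s - tau)) = rho * tau * (r - tau) by rewrite -el; ring.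
lra.
Qed.

End ConvexOnALine.

Section Lines.
Variables (R : realType) (d : nat).
Implicit Types (F : 'rV[R]_d -> R) (p v : 'rV[R]_d).

Lemma is_derive_line F p v t : derivable F (p + t *: v) v ->
  is_derive t 1 (fun s => F (p + s *: v)) ('D_v F (p + t *: v)).
Proof.
have quotientE : (fun h : R =>
    h^-1 *: (((fun s => F (p + s *: v)) \o shift t) (h *: 1) - F (p + t *: v))) =
  (fun h : R => h^-1 *: ((F \o shift (p + t *: v)) (h *: v) - F (p + t *: v))).
  by apply: funext => h /=; rewrite [h%:A]mulr1 scalerDl addrCA.
by move=> Fv; split; [rewrite /derivable quotientE | rewrite /derive quotientE].
Qed.

Lemma convex_fun_line F p v : convex_fun F -> forall x y l, 0 <= l -> l <= 1 ->
  F (p + (l * x + (1 - l) * y) *: v) <= l * F (p + x *: v) + (1 - l) * F (p + y *: v).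
Proof.
move=> F_convex x y l l0 l1.
have -> : p + (l * x + (1 - l) * y) *: v = l *: (p + x *: v) + (1 - l) *: (p + y *: v).
  by apply/rowP => i; rewrite !mxE; ring.
exact: F_convex.
Qed.

End Lines.

Section ConvexFunctions.
Variables (R : realType) (d : nat).
Implicit Types (F G : 'rV[R]_d -> R) (c : 'rV[R]_d).

Lemma convex_funD F G : convex_fun F -> convex_fun G -> convex_fun (F \+ G).
Proof.
move=> F_convex G_convex x y l l0 l1 /=.
by have := F_convex x y l l0 l1; have := G_convex x y l l0 l1; lra.
Qed.

Lemma convex_local_min F c (delta : R) : convex_fun F -> 0 < delta ->
  (forall z, norm2 (z - c) <= delta -> F c <= F z) -> is_minimizer F c.
Proof.
move=> F_convex delta0 c_min y; rewrite leNgt; apply/negP => Fyc.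
have yc0 : 0 < norm2 (y - c).
  by rewrite norm2_gt0 subr_eq0; apply: contraTneq Fyc => ->; rewrite ltxx.
set t := Num.min 1 (delta / norm2 (y - c)).
have t0 : 0 < t by rewrite lt_min ltr01 divr_gt0.
have t1 : t <= 1 by rewrite ge_min lexx.
have := F_convex y c t (ltW t0) t1.
have := c_min (t *: y + (1 - t) *: c).
have -> : t *: y + (1 - t) *: c - c = t *: (y - c).
  by apply/rowP => i; rewrite !mxE; ring.
rewrite norm2Z gtr0_norm // -ler_pdivlMr // ge_min lexx orbT => /(_ isT).
have : 0 < t * (F c - F y) by rewrite mulr_gt0 // subr_gt0.
nra.
Qed.

End ConvexFunctions.

Section Continuity.
Variables (R : realType) (d : nat).
Implicit Types (F : 'rV[R]_d -> R).

Lemma lipschitz2_continuous F (lam : R) : 0 <= lam -> lipschitz2 F lam -> continuous F.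
Proof.
move=> lam0 F_lip x.
apply/(@cvgrPdist_lt _ _ _ (nbhs x) (nbhs_filter x)) => e e0.
have D0 : 0 < lam * d%:R + 1 by rewrite ltr_pwDr // mulr_ge0.
apply/(@nbhs_normP R _ x); exists (e / (lam * d%:R + 1)); first by rewrite /= divr_gt0.
move=> y /=; rewrite ltr_pdivlMr // => xy.
apply: le_lt_trans (F_lip x y) _.
apply: le_lt_trans (_ : lam * (d%:R * `|x - y|) < e).
  by rewrite ler_wpM2l // ler_norm2_mx_norm.
by apply: le_lt_trans xy; rewrite mulrA mulrC ler_wpM2l // lerDl.
Qed.

Lemma cball2_compact (x0 : 'rV[R]_d) (r : R) : compact (cball2 x0 r).
Proof.
apply: bounded_closed_compact.
  apply: filterS (nbhs_pinfty_ge (num_real (`|x0| + r))) => M x0rM x /= xr.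
  apply: le_trans x0rM; rewrite -[x](subrK x0) addrC.
  by apply: le_trans (ler_normD _ _) _; rewrite lerD2l (le_trans (ler_mx_norm_norm2 _)).
have -> : cball2 x0 r = (fun y => norm2 (y - x0)) @^-1` [set z | z <= r] by [].
apply: preimage_closed; last exact: closed_le.
move=> y _; apply: (@lipschitz2_continuous _ 1) => // a b; rewrite mul1r.
by have := ler_dist_norm2 (a - x0) (b - x0); rewrite opprB addrA subrK.
Qed.

End Continuity.

Section StronglyConvexNearMinimizer.
Variables (R : realType) (d : nat) (f : 'rV[R]_d -> R) (x0 : 'rV[R]_d) (rho r : R).
Notation V := 'rV[R]_d.
Hypothesis f_convex : convex_fun f.
Hypothesis f_min : is_minimizer f x0.
Hypothesis rho_gt0 : 0 < rho.
Hypothesis r_gt0 : 0 < r.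
Hypothesis f_hessian : forall x, cball2 x0 r x ->
  twice_differentiable_at f x /\ hessian_ge f x rho.

Lemma differentiable_cball x : cball2 x0 r x -> differentiable f x.
Proof. by move=> /f_hessian[[f_near _] _]; exact: nbhs_singleton f_near. Qed.

Lemma line_derivatives (p v : V) (s : R) : cball2 x0 r (p + s *: v) ->
  [/\ is_derive s 1 (fun t => f (p + t *: v)) ('d f (p + s *: v) v),
      is_derive s 1 (fun t => 'd f (p + t *: v) v) (hessian f (p + s *: v) v v)
    & rho * dot v v <= hessian f (p + s *: v) v v].
Proof.
move=> psv; have f_diff := differentiable_cball psv.
have [[_ df_diff] f_hess] := f_hessian psv.
split => //.
- by have := is_derive_line (@diff_derivable _ _ _ _ _ v f_diff); rewrite deriveE.
- by have := is_derive_line (@diff_derivable _ _ _ _ _ v (df_diff v)); rewrite deriveE.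
Qed.

Lemma unit_direction x : x != x0 ->
  let e := (norm2 (x - x0))^-1 *: (x - x0) in
  norm2 e = 1 /\ x = x0 + norm2 (x - x0) *: e.
Proof.
rewrite -subr_eq0 -norm2_gt0 => xx0 e; split.
  by rewrite /e norm2Z gtr0_norm ?invr_gt0 // mulVf // gt_eqF.
by rewrite /e scalerA divff ?gt_eqF // scale1r addrC subrK.
Qed.

Lemma ray_increment_ge (e : V) s tau : norm2 e = 1 ->
  0 <= tau -> tau < s -> tau < r ->
  rho * tau * (s - tau) <= f (x0 + s *: e) - f (x0 + tau *: e).
Proof.
move=> e1.
have derivatives t : - r <= t <= r ->
  [/\ is_derive t 1 (fun s => f (x0 + s *: e)) ('d f (x0 + t *: e) e),
      is_derive t 1 (fun s => 'd f (x0 + s *: e) e) (hessian f (x0 + t *: e) e e)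
    & rho <= hessian f (x0 + t *: e) e e].
  move=> tr; have [] := line_derivatives (_ : cball2 x0 r (x0 + t *: e)).
    by rewrite /cball2 /= addrC addKr norm2Z e1 mulr1 ler_norml.
  by rewrite -sqr_norm2 e1 expr1n mulr1.
apply: (increment_ge derivatives r_gt0 (ltW rho_gt0)).
- by move=> t /=; rewrite scale0r addr0.
- exact: convex_fun_line.
Qed.

Lemma subgrad_norm_ge x u : subgrad f x u ->
  rho * Num.min (norm2 (x - x0)) r <= norm2 u.
Proof.
move=> u_subgrad.
have [->|xx0] := eqVneq x x0.
  by rewrite subrr norm2_0 min_l ?mulr0 ?norm2_ge0 // ltW.
have [] := unit_direction xx0.
set s := norm2 (x - x0); set e := s^-1 *: (x - x0) => e1 xE.
have slope_ge tau : 0 <= tau -> tau < s -> tau < r -> rho * tau <= dot u e.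
  move=> tau0 taus taur.
  have := ray_increment_ge e1 tau0 taus taur; rewrite -xE => increment.
  have := u_subgrad (x0 + tau *: e).
  have -> : x0 + tau *: e - x = (tau - s) *: e.
    by rewrite xE opprD addrACA subrr add0r -scalerBl.
  rewrite dotZr => subgrad_ineq.
  by rewrite -(ler_pM2r (_ : 0 < s - tau)) ?subr_gt0 //; lra.
apply/ler_ltP => z z_lt; have [z0|z0] := leP z 0.
  exact: le_trans z0 (norm2_ge0 u).
have : z / rho < Num.min s r by rewrite ltr_pdivrMr // mulrC.
rewrite lt_min => /andP[zs zr].
have := slope_ge _ (divr_ge0 (ltW z0) (ltW rho_gt0)) zs zr.
rewrite mulrCA divff ?gt_eqF // mulr1 => /le_trans; apply.
by have := dot_le_norm2 u e; rewrite e1 mulr1.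
Qed.

Lemma strict_midpoint_convex_cball y c : cball2 x0 r y -> cball2 x0 r c -> y != c ->
  f (2^-1 *: y + (1 - 2^-1) *: c) < 2^-1 * f y + (1 - 2^-1) * f c.
Proof.
move=> yr cr yc.
set v := y - c.
have v_gt0 : 0 < dot v v by rewrite lt_def dotxx_eq0 subr_eq0 yc dotxx_ge0.
have := @midpoint_convex_lt _ (fun t => f (c + t *: v))
  (fun t => 'd f (c + t *: v) v) (fun t => hessian f (c + t *: v) v v)
  (rho * dot v v) (fun s s01 => line_derivatives (cball2_segment yr cr s01)).
move=> /(_ (mulr_gt0 rho_gt0 v_gt0)).
have -> : c + 2^-1 *: v = 2^-1 *: y + (1 - 2^-1) *: c.
  by apply/rowP => i; rewrite !mxE; ring.
by rewrite scale0r addr0 scale1r [c + _]addrC subrK; lra.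
Qed.

Section LipschitzPerturbation.
Variables (g : V -> R) (lam : R).
Hypothesis g_convex : convex_fun g.
Hypothesis lam_ge0 : 0 <= lam.
Hypothesis g_lip : lipschitz2 g lam.
Hypothesis lam_lt : lam < rho * r.

Let h := f \+ g.

Lemma lam_div_rho_lt : lam / rho < r.
Proof. by rewrite ltr_pdivrMr // mulrC. Qed.

Lemma descent_toward_x0 x : lam / rho < norm2 (x - x0) ->
  exists2 z, h z < h x & norm2 (z - x0) < norm2 (x - x0).
Proof.
move=> x_far.
have lam_rho_ge0 : 0 <= lam / rho by rewrite divr_ge0 // ltW.
have xx0 : x != x0 by rewrite -subr_eq0 -norm2_gt0 (le_lt_trans lam_rho_ge0).
have [] := unit_direction xx0.
set s := norm2 (x - x0); set e := s^-1 *: (x - x0) => e1 xE.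
have lam_lt_min : lam / rho < Num.min s r by rewrite lt_min x_far lam_div_rho_lt.
set tau := (lam / rho + Num.min s r) / 2.
have lam_tau : lam < rho * tau.
  by rewrite -ltr_pdivrMl // mulrC /tau; lra.
have tau_min : tau < Num.min s r by rewrite /tau; lra.
move: tau_min; rewrite lt_min => /andP[taus taur].
have tau0 : 0 <= tau by rewrite /tau; lra.
exists (x0 + tau *: e); last by rewrite addrC addKr norm2Z e1 mulr1 ger0_norm.
have := ray_increment_ge e1 tau0 taus taur; rewrite -xE => increment.
have := g_lip (x0 + tau *: e) x.
have -> : x0 + tau *: e - x = (tau - s) *: e.
  by rewrite xE opprD addrACA subrr add0r -scalerBl.
rewrite norm2Z e1 mulr1 [`|tau - s|]distrC (@gtr0_norm _ (s - tau)) ?subr_gt0 //.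
rewrite ler_norml => /andP[_ g_le].
have : 0 < (s - tau) * (rho * tau - lam) by rewrite mulr_gt0 // subr_gt0.
rewrite /h /=; nra.
Qed.

Lemma minimizer_cball y : is_minimizer h y -> cball2 x0 (lam / rho) y.
Proof.
move=> y_min; rewrite /cball2 /= leNgt; apply/negP => /descent_toward_x0[z hz _].
by have := y_min z; rewrite leNgt hz.
Qed.

Lemma exists_minimizer : exists c, is_minimizer h c.
Proof.
have x0r : cball2 x0 r x0 by rewrite /cball2 /= subrr norm2_0 ltW.
have h_cont : {within cball2 x0 r, continuous h}.
  apply: continuous_in_subspaceT => x /[!inE] xr.
  apply: (@cvgD _ _ _ (nbhs x) (nbhs_filter x) f g).
    exact: differentiable_continuous (differentiable_cball xr).
  exact: (lipschitz2_continuous lam_ge0 g_lip).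
have cball_ne0 : cball2 x0 r !=set0 by exists x0.
have [c /[!inE] cr c_min] := EVT_min_rV cball_ne0 (@cball2_compact _ _ x0 r) h_cont.
have c_near : norm2 (c - x0) <= lam / rho.
  rewrite leNgt; apply/negP => /descent_toward_x0[z hz zc].
  have /mem_set /c_min : cball2 x0 r z by apply: le_trans (ltW zc) cr.
  by rewrite leNgt hz.
exists c; apply: (convex_local_min (delta := r - lam / rho)).
- exact: convex_funD.
- by rewrite subr_gt0 lam_div_rho_lt.
- move=> z zc; apply/c_min/mem_set; rewrite /cball2 /= -[z](subrK c) -addrA.
  by apply: le_trans (ler_norm2D _ _) _; lra.
Qed.

Lemma minimizer_unique y c : is_minimizer h y -> is_minimizer h c -> y = c.
Proof.
move=> y_min c_min; have [//|yc] := eqVneq y c; exfalso.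
have lam_r := ltW lam_div_rho_lt.
have yr : cball2 x0 r y by apply: le_trans (minimizer_cball y_min) lam_r.
have cr : cball2 x0 r c by apply: le_trans (minimizer_cball c_min) lam_r.
have := strict_midpoint_convex_cball yr cr yc.
have half_ge0 : (0 : R) <= 2^-1 by rewrite invr_ge0.
have half_le1 : (2^-1 : R) <= 1 by rewrite invf_le1 // ler1n.
have := g_convex y c half_ge0 half_le1.
have := c_min (2^-1 *: y + (1 - 2^-1) *: c); have := y_min c.
rewrite /h /=; lra.
Qed.

End LipschitzPerturbation.
End StronglyConvexNearMinimizer.

Unset Implicit Arguments.

Theorem lemmaE2 (R : realType) (d : nat) (f : 'rV[R]_d -> R) (x0 : 'rV[R]_d)
    (rho r : R) :
  convex_fun f -> is_minimizer f x0 -> 0 < rho -> 0 < r ->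
  (forall x, cball2 x0 r x -> twice_differentiable_at f x /\ hessian_ge f x rho) ->
  (forall (x u : 'rV[R]_d), subgrad f x u ->
     rho * Num.min (norm2 (x - x0)) r <= norm2 u) /\
  (forall (g : 'rV[R]_d -> R) (lam : R),
     convex_fun g -> 0 <= lam -> lipschitz2 g lam -> lam < rho * r ->
     exists xs : 'rV[R]_d,
       [/\ is_minimizer (f \+ g) xs,
           (forall y, is_minimizer (f \+ g) y -> y = xs)
         & cball2 x0 (lam / rho) xs]).
Proof.
move=> f_convex f_min rho_gt0 r_gt0 f_hessian; split.
  by move=> x u; apply: subgrad_norm_ge.
move=> g lam g_convex lam_ge0 g_lip lam_lt.
have [c c_min] := exists_minimizer f_convex f_min rho_gt0 r_gt0 f_hessian
  g_convex lam_ge0 g_lip lam_lt.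
exists c; split => [//|y y_min|].
- exact: (minimizer_unique f_convex f_min rho_gt0 r_gt0 f_hessian
    g_convex lam_ge0 g_lip lam_lt y_min c_min).
- exact: (minimizer_cball f_convex f_min rho_gt0 r_gt0 f_hessian
    lam_ge0 g_lip lam_lt c_min).
Qed.
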